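(* Let $p_0$ be a uniformly continuous density on $\mathbb{R}$, and let $z_{\min} := \inf\{z:p_0(z)>0\}$ and $z_{\max} := \sup\{z:p_0(z)>0\}$. Then (a) $\lim_{z\to-\infty}\psi_0^*(z)<\infty$ if and only if $\limsup_{z\searrow z_{\min}}h_0(z)<\infty$, in which case $z_{\min} = -\infty$; (b) $\lim_{z\to\infty}\psi_0^*(z)>-\infty$ if and only if $\limsup_{z\nearrow z_{\max}}h_0(z)<\infty$, in which case $z_{\max} = \infty$.
   Context: Convention $0/0:=0$. $F_0$ is the distribution function of $p_0$, $F_0^{-1}(u) := \inf\{z\in[-\infty,\infty]:F_0(z)\ge u\}$, $J_0 := p_0\circ F_0^{-1}$ on $[0,1]$, $\hat J_0$ its least concave majorant on $[0,1]$, and $\psi_0^* := \hat J_0^{(\mathrm{R})}\circ F_0\colon\mathbb{R}\to[-\infty,\infty]$ (right derivative; value at $1$ defined as the left limit). The two-sided hazard function is $h_0(z) := p_0(z)/\bigl(F_0(z)\wedge(1 - F_0(z))\bigr)$, so that $h_0(z) = 0$ whenever $F_0(z)\in\{0,1\}$. *)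

From HB Require Import structures.
From mathcomp Require Import all_boot all_order all_algebra.
From mathcomp Require Import all_classical all_reals all_analysis.
Set Implicit Arguments. Unset Strict Implicit. Unset Printing Implicit Defensive.
Import Order.TTheory GRing.Theory Num.Theory.
Import numFieldNormedType.Exports.
Local Open Scope classical_set_scope.
Local Open Scope ring_scope.

Section Defs.
Variable R : realType.
Local Notation mu := (@lebesgue_measure R).

Definition is_density (p : R -> R) : Prop :=
  (forall x, 0 <= p x) /\ measurable_fun setT p /\
  (\int[mu]_x (p x)%:E = 1)%E.

Definition unif_cont (p : R -> R) : Prop :=
  forall e : R, 0 < e -> exists2 d : R, 0 < d &
    forall x y : R, `|x - y| < d -> `|p x - p y| < e.

Definition distF (p : R -> R) (z : R) : R :=
  fine (\int[mu]_(x in [set x | (x <= z)%R]) (p x)%:E)%E.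

Definition distF_ext (p : R -> R) (z : \bar R) : R :=
  match z with
  | r%:E => distF p r
  | -oo%E => 0
  | +oo%E => 1
  end.

Definition dens_ext (p : R -> R) (z : \bar R) : R :=
  match z with
  | r%:E => p r
  | _ => 0
  end.

Definition quantile (p : R -> R) (u : R) : \bar R :=
  ereal_inf [set z : \bar R | u <= distF_ext p z].

Definition J0 (p : R -> R) (u : R) : R := dens_ext p (quantile p u).

Definition concave_on01 (g : R -> R) : Prop :=
  forall x y t : R, 0 <= x <= 1 -> 0 <= y <= 1 -> 0 <= t <= 1 ->
    t * g x + (1 - t) * g y <= g (t * x + (1 - t) * y).

(* least concave majorant of J on [0,1]: pointwise infimum of all concave
   majorants of J on [0,1] *)
Definition lcm01 (J : R -> R) (u : R) : \bar R :=
  ereal_inf [set (g u)%:E | g in [set g : R -> R | concave_on01 g /\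
                          forall v, 0 <= v <= 1 -> J v <= g v]].

Definition rderiv (g : R -> R) (u : R) : \bar R :=
  lim (((g (u + h) - g u) / h)%:E @[h --> 0^'+]).

Definition rderiv01 (g : R -> R) (u : R) : \bar R :=
  if u < 1 then rderiv g u else lim (rderiv g v @[v --> 1^'-]).

Definition Jhat (p : R -> R) (u : R) : R := fine (lcm01 (J0 p) u).

Definition psi_star (p : R -> R) (z : R) : \bar R :=
  rderiv01 (Jhat p) (distF p z).

(* two-sided hazard function; x / 0 = 0 in MathComp, matching 0/0 := 0 *)
Definition hazard (p : R -> R) (z : R) : R :=
  p z / Num.min (distF p z) (1 - distF p z).

Definition zmin (p : R -> R) : \bar R := ereal_inf [set z%:E | z in [set z | 0 < p z]].
Definition zmax (p : R -> R) : \bar R := ereal_sup [set z%:E | z in [set z | 0 < p z]].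

Definition from_right (a : \bar R) : set_system R :=
  match a with
  | r%:E => r^'+
  | -oo%E => -oo
  | +oo%E => +oo
  end.
Definition from_left (a : \bar R) : set_system R :=
  match a with
  | r%:E => r^'-
  | -oo%E => -oo
  | +oo%E => +oo
  end.

End Defs.

(* psi_0^* is nonincreasing, so its limits at -oo and +oo exist; they are
   governed by the right derivative of the concave majorant \hat J_0 near
   u = 0 and u = 1.  If h_0 <= C near z_min then z_min = -oo (see below), and
   as J_0(u) = p_0(z) for some z with F_0(z) = u, the bound p_0 <= C F_0 far
   to the left together with p_0 <= M elsewhere gives J_0(u) <= K u on [0,1];
   hence \hat J_0(u) <= K u and psi_0^* <= K.  Conversely, uniform continuity
   makes p_0 small where F_0 is small, so \hat J_0(0+) = 0; if psi_0^* <= C,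
   concavity then yields \hat J_0(u) <= C u, and p_0(z) = J_0(F_0(z))
   <= C F_0(z) bounds h_0 where F_0 <= 1/2.  A bound h_0 <= C next to a finite
   endpoint r of the support would give F_0(z) <= C (z - r) F_0(z) for z near
   r, i.e. F_0 = 0 just right of r, contradicting the definition of r.
   Part (b) is the mirror image. *)

From HB Require Import structures.
From mathcomp Require Import all_boot all_order all_algebra.
From mathcomp Require Import all_classical all_reals all_analysis.
From mathcomp Require Import measurable_realfun ring lra.
Import Order.TTheory GRing.Theory Num.Theory.
Import numFieldNormedType.Exports.
Local Open Scope classical_set_scope.
Local Open Scope ring_scope.
Set Implicit Arguments. Unset Strict Implicit. Unset Printing Implicit Defensive.

Lemma limf_esup_EFin_lty (R : realType) (f : R -> R) (F : set_system R) :
  (limf_esup (fun z => (f z)%:E) F < +oo)%E <->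
  exists2 V, F V & exists2 C, 0 <= C & forall x, V x -> f x <= C.
Proof.
split.
- move=> /ereal_inf_lt[_ [V FV <-]] supV; exists V => //.
  have f_le_sup x : V x -> ((f x)%:E <= ereal_sup ((fun z => (f z)%:E) @` V))%E.
    by move=> Vx; apply: ereal_sup_ubound; exists x.
  move: supV f_le_sup; case: (ereal_sup _) => [r| |] // _ f_le_sup.
    exists (Num.max r 0); first by rewrite le_max lexx orbT.
    by move=> x /f_le_sup; rewrite lee_fin le_max => ->.
  by exists 0 => // x /f_le_sup.
- move=> [V FV [C _ fC]].
  apply: (@le_lt_trans _ _ (ereal_sup ((fun z => (f z)%:E) @` V))).
    by apply: ereal_inf_lbound; exists V.
  apply: (@le_lt_trans _ _ C%:E); last exact: ltry.
  by apply: ge_ereal_sup => _ [x Vx <-]; rewrite lee_fin fC.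
Qed.

Lemma lty_le_EFin (R : realType) (x : \bar R) :
  (x < +oo)%E -> exists2 C : R, 0 <= C & (x <= C%:E)%E.
Proof.
case: x => [r| |] // _; last by exists 0 => //; exact: leNye.
by exists (Num.max r 0); rewrite ?lee_fin le_max ?lexx ?orbT.
Qed.

Lemma gtNy_ge_EFin (R : realType) (x : \bar R) :
  (-oo < x)%E -> exists2 C : R, 0 <= C & ((- C)%:E <= x)%E.
Proof.
case: x => [r| |] // _; last by exists 0 => //; exact: leey.
by exists (Num.max (- r) 0); rewrite ?lee_fin 1?lerNl le_max lexx ?orbT.
Qed.

Lemma at_right_itv (R : realType) (r : R) (V : set R) : r^'+ V ->
  exists2 e, 0 < e & forall y, r < y < r + e -> V y.
Proof.
case=> e /= e0 reV; exists e => // y /andP[ry yre]; apply: reV => //=.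
rewrite distrC ger0_norm; lra.
Qed.

Lemma at_left_itv (R : realType) (r : R) (V : set R) : r^'- V ->
  exists2 e, 0 < e & forall y, r - e < y < r -> V y.
Proof.
case=> e /= e0 reV; exists e => // y /andP[rey yr]; apply: reV => //=.
rewrite ger0_norm; lra.
Qed.

Section nonincreasing_ereal.
Variables (R : realType) (f : R -> \bar R).
Hypothesis f_noninc : forall x y, x <= y -> (f y <= f x)%E.

Lemma nonincreasing_cvgNy : cvg (f z @[z --> -oo%R]).
Proof.
apply/cvg_ex; eexists; apply/cvgNy_compNP; apply: nondecreasing_cvge.
by move=> a b ab /=; apply: f_noninc; rewrite lerN2.
Qed.

Lemma nonincreasing_cvgy : cvg (f z @[z --> +oo%R]).
Proof. by apply/cvg_ex; eexists; apply: nonincreasing_cvge. Qed.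

Lemma nonincreasing_le_limNy z : (f z <= lim (f x @[x --> -oo%R]))%E.
Proof.
apply: lime_ge; first exact: nonincreasing_cvgNy.
near=> x; apply/f_noninc/ltW.
by near: x; apply: nbhs_ninfty_lt; exact: num_real.
Unshelve. all: by end_near. Qed.

Lemma nonincreasing_limy_le z : (lim (f x @[x --> +oo%R]) <= f z)%E.
Proof.
apply: lime_le; first exact: nonincreasing_cvgy.
near=> x; apply/f_noninc/ltW.
by near: x; apply: nbhs_pinfty_gt; exact: num_real.
Unshelve. all: by end_near. Qed.

End nonincreasing_ereal.

Lemma concave_on01_affine (R : realType) (a b : R) :
  concave_on01 (fun u => a + b * u).
Proof. by move=> x y t _ _ _; rewrite le_eqVlt; apply/orP; left; apply/eqP; ring. Qed.

Section concave_on01.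
Variables (R : realType) (g : R -> R).
Hypothesis g_concave : concave_on01 g.
Local Notation D := (rderiv g).

Lemma concave_on01_chord a b c : 0 <= a -> a < b -> b < c -> c <= 1 ->
  (c - b) * g a + (b - a) * g c <= (c - a) * g b.
Proof.
move=> a0 ab bc c1; have ca : 0 < c - a by lra.
pose t := (c - b) / (c - a).
have t01 : 0 <= t <= 1.
  by rewrite divr_ge0 ?ler_pdivrMr ?mul1r /=; lra.
have tb : t * a + (1 - t) * c = b by rewrite /t; field; rewrite gt_eqF.
have scaled : (c - a) * (t * g a + (1 - t) * g c) = (c - b) * g a + (b - a) * g c.
  by rewrite /t; field; rewrite gt_eqF.
rewrite -scaled ler_wpM2l ?(ltW ca) //.
by have := @g_concave a c t; rewrite tb; apply => //; apply/andP; split; lra.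
Qed.

Lemma concave_on01_slope_le v h1 h2 : 0 <= v -> 0 < h1 -> h1 <= h2 -> v + h2 <= 1 ->
  (g (v + h2) - g v) / h2 <= (g (v + h1) - g v) / h1.
Proof.
move=> v0 h10 h12 vh2; have [->//|h1h2] := eqVneq h1 h2.
rewrite ler_pdivrMr; last lra.
rewrite mulrAC ler_pdivlMr; last lra.
have := @concave_on01_chord v (v + h1) (v + h2) v0; lra.
Qed.

Lemma concave_on01_slope_le_chord u v h : 0 <= u -> u < v -> 0 < h -> v + h <= 1 ->
  (g (v + h) - g v) / h <= (g v - g u) / (v - u).
Proof.
move=> u0 uv h0 vh; rewrite ler_pdivrMr; last lra.
rewrite mulrAC ler_pdivlMr; last lra.
have := @concave_on01_chord u v (v + h) u0 uv; lra.
Qed.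

Lemma rderiv_cvg v : 0 <= v < 1 -> cvg (((g (v + h) - g v) / h)%:E @[h --> 0^'+]).
Proof.
move=> /andP[v0 v1]; apply: nonincreasing_at_right_is_cvge.
near=> x => n m; rewrite !in_itv /= => /andP[n0 nx] /andP[m0 mx] nm.
rewrite lee_fin concave_on01_slope_le //.
have : x < 1 - v by near: x; apply: nbhs_right_lt; lra.
lra.
Unshelve. all: by end_near. Qed.

Lemma rderiv_le v d X : 0 <= v < 1 -> 0 < d ->
  (forall h, 0 < h < d -> (g (v + h) - g v) / h <= X) -> (D v <= X%:E)%E.
Proof.
move=> v01 d0 slopeX; apply: lime_le; first exact: rderiv_cvg.
near=> h; rewrite lee_fin; apply: slopeX; apply/andP; split.
- by near: h; exact: nbhs_right_gt.
- by near: h; exact: nbhs_right_lt.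
Unshelve. all: by end_near. Qed.

Lemma chord_le_rderiv u v : 0 <= u -> u < v -> v <= 1 ->
  (((g v - g u) / (v - u))%:E <= D u)%E.
Proof.
move=> u0 uv v1; apply: lime_ge; first by apply: rderiv_cvg; apply/andP; split; lra.
near=> h; rewrite lee_fin.
have h0 : 0 < h by near: h; exact: nbhs_right_gt.
have hvu : h <= v - u by apply/ltW; near: h; apply: nbhs_right_lt; lra.
by have := concave_on01_slope_le u0 h0 hvu; rewrite (addrC u (v - u)) subrK; apply.
Unshelve. all: by end_near. Qed.

Lemma rderiv_le_chord u v : 0 <= u -> u < v -> v < 1 ->
  (D v <= ((g v - g u) / (v - u))%:E)%E.
Proof.
move=> u0 uv v1; apply: (@rderiv_le v (1 - v)); [apply/andP; split; lra|lra|].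
by move=> h /andP[h0 h1]; apply: concave_on01_slope_le_chord => //; lra.
Qed.

Lemma rderiv_noninc u v : 0 <= u -> u <= v -> v < 1 -> (D v <= D u)%E.
Proof.
move=> u0; rewrite le_eqVlt => /predU1P[->//|uv] v1.
exact: le_trans (rderiv_le_chord u0 uv v1) (chord_le_rderiv u0 uv (ltW v1)).
Qed.

Lemma rderiv_cvg_left1 : cvg (D v @[v --> 1^'-]).
Proof.
suff : cvg ((D \o -%R) x @[x --> (-1)^'+]).
  by move=> /cvg_ex[l Dl]; apply/cvg_ex; exists l; apply/cvg_at_leftNP.
apply: nondecreasing_at_right_is_cvge.
near=> x => n m; rewrite !in_itv /= => /andP[n1 nx] /andP[m1 mx] nm.
have x0 : x < 0 by near: x; apply: nbhs_right_lt; lra.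
apply: rderiv_noninc; lra.
Unshelve. all: by end_near. Qed.

Lemma rderiv01_noninc u v : 0 <= u -> u <= v -> (rderiv01 g v <= rderiv01 g u)%E.
Proof.
move=> u0 uv; rewrite /rderiv01.
have [v1|v1] := ltP v 1; first by rewrite (le_lt_trans uv v1) rderiv_noninc.
case: ifPn => // u1; apply: lime_le; first exact: rderiv_cvg_left1.
by near=> w; apply: rderiv_noninc => //; near: w; apply: nbhs_left_ge.
Unshelve. all: by end_near. Qed.

Lemma rderiv_le_of_le_linear K : 0 <= g 0 ->
  (forall u, 0 <= u <= 1 -> g u <= K * u) ->
  forall v, 0 <= v < 1 -> (D v <= K%:E)%E.
Proof.
move=> g0 gK v /andP[v0 v1]; apply: le_trans (rderiv_noninc (lexx 0) v0 v1) _.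
apply: (@rderiv_le 0 1); [by rewrite lexx ltr01 | exact: ltr01 |].
move=> h /andP[h0 h1]; rewrite add0r ler_pdivrMr //.
have := gK h; rewrite (ltW h0) (ltW h1) => /(_ isT); lra.
Qed.

Lemma rderiv_ge_of_le_linear1 K : 0 <= g 1 ->
  (forall u, 0 <= u <= 1 -> g u <= K * (1 - u)) ->
  forall v, 0 <= v < 1 -> ((- K)%:E <= D v)%E.
Proof.
move=> g1 gK v /andP[v0 v1]; apply: le_trans (chord_le_rderiv v0 v1 (lexx 1)).
rewrite lee_fin ler_pdivlMr ?subr_gt0 //.
have := gK v; rewrite v0 (ltW v1) => /(_ isT); lra.
Qed.

Lemma le_linear_of_rderiv_le C : 0 <= C ->
  (forall e, 0 < e -> exists2 K, 0 <= K & forall w, 0 <= w <= 1 -> g w <= e + K * w) ->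
  (forall w, 0 < w < 1 -> (D w <= C%:E)%E) ->
  forall u, 0 < u <= 1 -> g u <= C * u.
Proof.
move=> C0 g_small DC u /andP[u0 u1]; apply/ler_addgt0Pr => e e0.
have [K K0 gK] := g_small (e / 2) (divr_gt0 e0 (@ltr0Sn _ 1)).
pose w := Num.min (u / 2) (e / 2 / (K + 1)).
have w0 : 0 < w by rewrite lt_min !divr_gt0 //; lra.
have wu : w < u by rewrite gt_min; lra.
have Kw : (K + 1) * w <= e / 2.
  by rewrite mulrC -ler_pdivlMr; [rewrite ge_min lexx orbT | lra].
have slope : g u - g w <= C * (u - w).
  have := le_trans (chord_le_rderiv (ltW w0) wu u1) (DC w _).
  by rewrite lee_fin ler_pdivrMr ?subr_gt0 //; apply; lra.
have gw : g w <= e / 2 + K * w by apply: gK; lra.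
have : 0 <= C * w by rewrite mulr_ge0 // ltW.
lra.
Qed.

Lemma le_linear1_of_rderiv_ge C : 0 <= C ->
  (forall e, 0 < e ->
    exists2 K, 0 <= K & forall w, 0 <= w <= 1 -> g w <= e + K * (1 - w)) ->
  (forall w, 0 < w < 1 -> ((- C)%:E <= D w)%E) ->
  forall u, 0 <= u < 1 -> g u <= C * (1 - u).
Proof.
move=> C0 g_small DC u /andP[u0 u1]; apply/ler_addgt0Pr => e e0.
have [K K0 gK] := g_small (e / 2) (divr_gt0 e0 (@ltr0Sn _ 1)).
pose d := Num.min ((1 - u) / 2) (e / 2 / (K + 1)).
have d0 : 0 < d by rewrite lt_min !divr_gt0 //; lra.
have du : d < 1 - u by rewrite gt_min; lra.
have Kd : (K + 1) * d <= e / 2.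
  by rewrite mulrC -ler_pdivlMr; [rewrite ge_min lexx orbT | lra].
have slope : - C * (1 - d - u) <= g (1 - d) - g u.
  have w01 : 0 < 1 - d < 1 by apply/andP; split; lra.
  have uw : u < 1 - d by lra.
  have := le_trans (DC _ w01) (rderiv_le_chord u0 uw (proj2 (andP w01))).
  by rewrite lee_fin ler_pdivlMr ?subr_gt0.
have gw : g (1 - d) <= e / 2 + K * (1 - (1 - d)) by apply: gK; lra.
have : 0 <= C * d by rewrite mulr_ge0 // ltW.
lra.
Qed.

End concave_on01.

Section least_concave_majorant.
Variables (R : realType) (J : R -> R).
Hypothesis J_ub : exists M, forall u, J u <= M.

Lemma lcm01_fin u : 0 <= u <= 1 -> lcm01 J u = (fine (lcm01 J u))%:E.
Proof.
move=> u01; have [M JM] := J_ub.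
have lcm_ge : ((J u)%:E <= lcm01 J u)%E.
  by apply: le_ereal_inf_tmp => _ [g [_ Jg] <-]; rewrite lee_fin Jg.
have lcm_le : (lcm01 J u <= M%:E)%E.
  apply: ereal_inf_lbound; exists (fun v => M + 0 * v); last by rewrite mul0r addr0.
  by split; [exact: concave_on01_affine | move=> v _; rewrite mul0r addr0].
by move: lcm_ge lcm_le; case: (lcm01 J u).
Qed.

Lemma lcm01_ge u : 0 <= u <= 1 -> J u <= fine (lcm01 J u).
Proof.
move=> u01; rewrite -lee_fin -lcm01_fin //.
by apply: le_ereal_inf_tmp => _ [g [_ Jg] <-]; rewrite lee_fin Jg.
Qed.

Lemma lcm01_le g u : concave_on01 g -> (forall v, 0 <= v <= 1 -> J v <= g v) ->
  0 <= u <= 1 -> fine (lcm01 J u) <= g u.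
Proof.
move=> g_concave Jg u01; rewrite -lee_fin -lcm01_fin //.
by apply: ereal_inf_lbound; exists g.
Qed.

Lemma concave_on01_lcm01 : concave_on01 (fun u => fine (lcm01 J u)).
Proof.
move=> x y t x01 y01 t01; rewrite -lee_fin -lcm01_fin; last first.
  case/andP: x01 => x0 x1; case/andP: y01 => y0 y1; case/andP: t01 => t0 t1.
  by apply/andP; split; nra.
apply: le_ereal_inf_tmp => _ [g [g_concave Jg] <-]; rewrite lee_fin.
apply: le_trans (g_concave _ _ _ x01 y01 t01); case/andP: t01 => t0 t1.
by apply: lerD; apply: ler_wpM2l; rewrite ?subr_ge0 // lcm01_le.
Qed.

End least_concave_majorant.

Section density.
Variables (R : realType) (p : R -> R).
Hypothesis p_ge0 : forall x, 0 <= p x.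
Hypothesis p_meas : measurable_fun setT p.
Local Notation mu := (@lebesgue_measure R).
Hypothesis p_int1 : (\int[mu]_x (p x)%:E = 1)%E.
Local Notation mass A := (\int[mu]_(x in A) (p x)%:E)%E.
Local Notation F := (distF p).

Let measurable_fun_p (A : set R) : measurable_fun A (fun x => (p x)%:E).
Proof. exact/measurable_funTS/measurable_EFinP. Qed.

Lemma mass_ge0 A : (0 <= mass A)%E.
Proof. by apply: integral_ge0 => x _; rewrite lee_fin. Qed.

Lemma mass_fin_num A : measurable A -> mass A \is a fin_num.
Proof.
move=> mA; rewrite ge0_fin_numE ?mass_ge0 //.
apply: (@le_lt_trans _ _ 1%E); last exact: ltry.
rewrite -p_int1; apply: ge0_subset_integral => //; first exact: measurable_fun_p.
by move=> x _; rewrite lee_fin.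
Qed.

Lemma distFE z : (F z)%:E = mass `]-oo, z].
Proof. by rewrite /distF set_itvNyc fineK // -set_itvNyc mass_fin_num. Qed.

Lemma distF_add_mass_itv a b : a <= b -> (F b)%:E = ((F a)%:E + mass `]a, b])%E.
Proof.
move=> ab; rewrite !distFE -ge0_integral_setU //.
- congr (integral _ _ _); apply/seteqP; split => x /=.
    rewrite in_itv /= => xb; have [xa|ax] := leP x a; [left | right];
      by rewrite /= in_itv /= ?xa ?ax ?xb.
  by rewrite !in_itv /=; case=> [xa|/andP[_ //]]; exact: le_trans xa ab.
- exact: measurable_fun_p.
- by move=> x _; rewrite lee_fin.
- rewrite disj_set2E; apply/eqP/seteqP; split => x // [] /=.
  by rewrite !in_itv /= => xa /andP[ax _]; lra.
Qed.

Lemma distF_add_mass_gt a : ((F a)%:E + mass `]a, +oo[)%E = 1%E.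
Proof.
rewrite distFE -ge0_integral_setU //.
- rewrite -p_int1; congr (integral _ _ _); apply/seteqP; split => x // _ /=.
  by have [xa|ax] := leP x a; [left|right]; rewrite /= in_itv /= ?xa ?ax.
- exact: measurable_fun_p.
- by move=> x _; rewrite lee_fin.
- rewrite disj_set2E; apply/eqP/seteqP; split => x // [] /=.
  by rewrite !in_itv /= andbT => xa ax; lra.
Qed.

Lemma mass_itv a b : a <= b -> mass `]a, b] = (F b - F a)%:E.
Proof.
move=> ab; have := distF_add_mass_itv ab.
rewrite -(fineK (mass_fin_num (measurable_itv `]a, b]))) -EFinD => -[->].
by rewrite addrC addKr.
Qed.

Lemma distF_ge0 z : 0 <= F z.
Proof. by rewrite -lee_fin distFE mass_ge0. Qed.

Lemma distF_le1 z : F z <= 1.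
Proof.
have := distF_add_mass_gt z; rewrite -(fineK (mass_fin_num (measurable_itv _))).
by rewrite -EFinD => -[Fz]; have := fine_ge0 (mass_ge0 `]z, +oo[); lra.
Qed.

Lemma distF_le a b : a <= b -> F a <= F b.
Proof.
by move=> ab; rewrite -lee_fin (distF_add_mass_itv ab) leeDl // mass_ge0.
Qed.

Let mass_itv_cst a b K : a <= b ->
  (\int[mu]_(x in `]a, b]) (cst K%:E) x)%E = (K * (b - a))%:E.
Proof.
move=> ab; rewrite integral_cst //; have := @lebesgue_measure_itv R `]a, b].
rewrite /= lte_fin => ->; case: ltP => [_|ba]; first by rewrite -EFinD -EFinM.
by rewrite (_ : b = a) ?subrr ?mulr0 ?mule0 //; lra.
Qed.

Lemma distF_sub_le a b K : a <= b -> (forall x, a < x <= b -> p x <= K) ->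
  F b - F a <= K * (b - a).
Proof.
move=> ab pK; rewrite -lee_fin -mass_itv // -mass_itv_cst //.
apply: ge0_le_integral => //.
- by move=> x _; rewrite lee_fin.
- exact: measurable_fun_p.
Qed.

Lemma distF_sub_ge a b k : 0 <= k -> a <= b -> (forall x, a < x <= b -> k <= p x) ->
  k * (b - a) <= F b - F a.
Proof.
move=> k0 ab pk; rewrite -lee_fin -mass_itv // -mass_itv_cst //.
by apply: ge0_le_integral => //; exact: measurable_fun_p.
Qed.

Lemma mass_cvg1 (A : nat -> set R) : (forall n, measurable (A n)) ->
  {homo A : n m / (n <= m)%N >-> n `<=` m} -> (forall x, exists n, A n x) ->
  (mass (A n) @[n --> \oo] --> 1%E).
Proof.
move=> mA ndA covA; rewrite -p_int1.
have p_lim x : (p x)%:E = limn (fun n => ((EFin \o p) \_ (A n)) x).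
  apply/esym/lim_near_cst => //; have [N AN] := covA x.
  by exists N => // n /= Nn; rewrite patchE mem_set //; exact: ndA AN.
under eq_fun do rewrite integral_mkcond.
under eq_integral do rewrite p_lim.
apply: cvg_monotone_convergence => //.
- by move=> n; apply/(measurable_restrictT _ (mA n)); exact: measurable_fun_p.
- by move=> n x _; rewrite patchE; case: ifP => // _; rewrite lee_fin.
- move=> x _ m n mn; rewrite !patchE; case: ifP => [/set_mem xm|_].
    by rewrite mem_set //; exact: ndA xm.
  by case: ifP => // _; rewrite lee_fin.
Qed.

Lemma exists_distF_gt e : 0 < e -> exists z, 1 - e < F z.
Proof.
move=> e0; have : (F n%:R)%:E @[n --> \oo] --> 1%E.
  under eq_fun do rewrite distFE.
  apply: mass_cvg1 => [n|n m nm x|x]; first exact: measurable_itv.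
    by rewrite /= !in_itv /= => /le_trans; apply; rewrite ler_nat.
  exists (Num.bound `|x|); rewrite /= in_itv /=.
  exact/ltW/(le_lt_trans (ler_norm x))/archi_boundP.
move=> /fine_cvgP[_] /(cvgr_gt 1) /(_ (1 - e)) [|N _ FN]; first lra.
by exists N%:R; exact: (FN N (leqnn N)).
Qed.

Lemma exists_distF_lt e : 0 < e -> exists z, F z < e.
Proof.
move=> e0; have : mass `](- n%:R)%R, +oo[ @[n --> \oo] --> 1%E.
  apply: mass_cvg1 => [n|n m nm x|x]; first exact: measurable_itv.
    by rewrite /= !in_itv /= !andbT; apply: le_lt_trans; rewrite lerN2 ler_nat.
  exists (Num.bound `|x|); rewrite /= in_itv /= andbT ltrNl.
  by apply: le_lt_trans (archi_boundP _); rewrite -normrN ?ler_norm.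
move=> /fine_cvgP[_] /(cvgr_gt 1) /(_ (1 - e)) [|N _ massN]; first lra.
exists (- N%:R); have := massN N (leqnn N); have := distF_add_mass_gt (- N%:R).
by rewrite -(fineK (mass_fin_num (measurable_itv _))) -EFinD => -[/=]; lra.
Qed.

Lemma exists_density_gt0 : exists x, 0 < p x.
Proof.
apply/not_existsP => p_le0.
have {}p_le0 x : p x <= 0 by rewrite leNgt; apply/negP/p_le0.
have half_gt0 : 0 < 1 / 2 :> R by lra.
have [z0 Fz0] := exists_distF_lt half_gt0.
have [z1 Fz1] := exists_distF_gt half_gt0.
have [z01|z10] := leP z0 z1.
  by have := distF_sub_le z01 (fun x _ => p_le0 x); rewrite mul0r; lra.
by have := distF_le (ltW z10); lra.
Qed.

Lemma distF_eq0 y : (forall x, x <= y -> p x <= 0) -> F y = 0.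
Proof.
move=> p_le0; apply/eqP; rewrite eq_le distF_ge0 andbT; apply/ler_addgt0Pr => e e0.
have [z Fz] := exists_distF_lt e0; rewrite add0r.
have [yz|zy] := leP y z; first by have := distF_le yz; lra.
have := distF_sub_le (ltW zy) (fun x xzy => p_le0 x (proj2 (andP xzy))).
by rewrite mul0r; lra.
Qed.

Lemma distF_eq1 y : (forall x, y < x -> p x <= 0) -> F y = 1.
Proof.
move=> p_le0; apply/eqP; rewrite eq_le distF_le1 /=; apply/ler_addgt0Pr => e e0.
have [z Fz] := exists_distF_gt e0.
have [zy|yz] := leP z y; first by have := distF_le zy; lra.
have := distF_sub_le (ltW yz) (fun x xyz => p_le0 x (proj1 (andP xyz))).
by rewrite mul0r; lra.
Qed.

Lemma zmin_le x : 0 < p x -> (zmin p <= x%:E)%E.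
Proof. by move=> px; apply: ereal_inf_lbound; exists x. Qed.

Lemma zmax_ge x : 0 < p x -> (x%:E <= zmax p)%E.
Proof. by move=> px; apply: ereal_sup_ubound; exists x. Qed.

Lemma zmin_lt z : (zmin p < z%:E)%E -> exists2 x, 0 < p x & x < z.
Proof. by move=> /ereal_inf_lt[_ [x px <-]]; rewrite lte_fin; exists x. Qed.

Lemma zmax_gt z : (z%:E < zmax p)%E -> exists2 x, 0 < p x & z < x.
Proof. by move=> /ereal_sup_gt[_ [x px <-]]; rewrite lte_fin; exists x. Qed.

Lemma zmin_neq_pinfty : zmin p != +oo%E.
Proof. by have [x /zmin_le] := exists_density_gt0; apply: contraTneq => ->. Qed.

Lemma zmax_neq_ninfty : zmax p != -oo%E.
Proof. by have [x /zmax_ge] := exists_density_gt0; apply: contraTneq => ->. Qed.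

Hypothesis p_unif_cont : unif_cont p.

Lemma density_near e : 0 < e -> exists2 d, 0 < d &
  forall x y, `|x - y| < d -> p x - e < p y < p x + e.
Proof.
move=> e0; have [d d0 pd] := p_unif_cont e0; exists d => // x y /pd.
by rewrite ltr_distlC.
Qed.

Lemma density_bounded : exists2 M, 0 < M & forall x, p x <= M.
Proof.
have [d d0 pd] := density_near ltr01.
exists (1 + 4 / d); first by rewrite ltr_wpDr // ltW // divr_gt0.
move=> x; rewrite leNgt; apply/negP => px.
have F_incr : 4 / d * (x - (x - d / 2)) <= F x - F (x - d / 2).
  apply: distF_sub_ge; [by rewrite ltW // divr_gt0 | lra |].
  move=> y /andP[xy yx]; have /pd/andP[+ _] : `|x - y| < d by rewrite ger0_norm; lra.
  lra.
have : 4 / d * (x - (x - d / 2)) = 2 by field; rewrite gt_eqF.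
have := distF_le1 x; have := distF_ge0 (x - d / 2); lra.
Qed.

Lemma distF_lt_of_density_gt0 x a b : 0 < p x -> a < b -> a <= x <= b -> F a < F b.
Proof.
move=> px ab /andP[ax xb]; have [d d0 pd] := density_near (divr_gt0 px (@ltr0Sn _ 1)).
pose c := Num.max a (x - d / 2); pose c' := Num.min b (x + d / 2).
have cc' : c < c' by rewrite gt_max !lt_min; apply/andP; split; apply/andP; split; lra.
have F_incr : p x / 2 * (c' - c) <= F c' - F c.
  apply: distF_sub_ge; [lra | exact: ltW |].
  move=> y /andP[cy yc']; apply/ltW.
  have /pd/andP[+ _] : `|x - y| < d.
    rewrite ltr_distlC; move: cy yc'; rewrite gt_max le_min => /andP[_ ?] /andP[_ ?].
    lra.
  lra.
have Fac : F a <= F c by apply: distF_le; rewrite le_max lexx.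
have Fc'b : F c' <= F b by apply: distF_le; rewrite ge_min lexx.
have : 0 < p x / 2 * (c' - c) by rewrite mulr_gt0 ?subr_gt0 //; lra.
lra.
Qed.

Lemma distF_gt0 x : 0 < p x -> 0 < F x.
Proof.
move=> px; have := @distF_lt_of_density_gt0 x (x - 1) x px.
have := distF_ge0 (x - 1); rewrite lexx andbT; lra.
Qed.

Lemma distF_lt1 x : 0 < p x -> F x < 1.
Proof.
move=> px; have := @distF_lt_of_density_gt0 x x (x + 1) px.
have := distF_le1 (x + 1); rewrite lexx; lra.
Qed.

Lemma density_small_at_tails e : 0 < e -> exists2 d, 0 < d &
  (forall z, F z < d -> p z <= e) /\ (forall z, 1 - d < F z -> p z <= e).
Proof.
move=> e0; have [d d0 pd] := density_near (divr_gt0 e0 (@ltr0Sn _ 1)).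
exists (e / 2 * (d / 2)); first by rewrite !mulr_gt0 ?divr_gt0.
have p_near z y : e < p z -> `|z - y| < d -> e / 2 <= p y.
  by move=> ez /pd/andP[+ _]; lra.
split => z; apply: contraTT; rewrite -!ltNge => ez.
- have : e / 2 * (z - (z - d / 2)) <= F z - F (z - d / 2).
    apply: distF_sub_ge; [lra | lra | move=> y /andP[zy yz]].
    by apply: p_near ez _; rewrite ger0_norm; lra.
  by have := distF_ge0 (z - d / 2); lra.
- have : e / 2 * (z + d / 2 - z) <= F (z + d / 2) - F z.
    apply: distF_sub_ge; [lra | lra | move=> y /andP[zy yz]].
    by apply: p_near ez _; rewrite distrC ger0_norm; lra.
  by have := distF_le1 (z + d / 2); lra.
Qed.

Lemma distF_zmin r : zmin p = r%:E -> F r = 0.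
Proof.
move=> zr; have [M M0 pM] := density_bounded.
apply/eqP; rewrite eq_le distF_ge0 andbT; apply/ler_addgt0Pr => e e0; rewrite add0r.
have eM : 0 < e / M by rewrite divr_gt0.
have F0 : F (r - e / M) = 0.
  apply: distF_eq0 => x xr; rewrite leNgt; apply/negP => /zmin_le.
  by rewrite zr lee_fin; lra.
have Me : M * (r - (r - e / M)) = e by field; rewrite gt_eqF.
have rr : r - e / M <= r by lra.
by have := distF_sub_le rr (fun x _ => pM x); rewrite F0 Me subr0.
Qed.

Lemma distF_zmax r : zmax p = r%:E -> F r = 1.
Proof.
move=> zr; apply: distF_eq1 => x rx; rewrite leNgt; apply/negP => /zmax_ge.
by rewrite zr lee_fin; lra.
Qed.

Lemma density_zmax_le0 r : zmax p = r%:E -> p r <= 0.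
Proof.
move=> zr; rewrite leNgt; apply/negP => pr.
have [d d0 pd] := density_near (divr_gt0 pr (@ltr0Sn _ 1)).
have /pd/andP[+ _] : `|r - (r + d / 2)| < d.
  by rewrite opprD addrA subrr add0r normrN ger0_norm; lra.
have := zmax_ge (x := r + d / 2); rewrite zr lee_fin; lra.
Qed.

(* [F] is Lipschitz, so the infimum defining the quantile is attained. *)
Lemma distF_quantile u z : quantile p u = z%:E -> F z = u.
Proof.
move=> qz; have [M M0 pM] := density_bounded.
have F_lt t : t < z -> F t < u.
  move=> tz; rewrite ltNge; apply/negP => ut.
  have : (quantile p u <= t%:E)%E by apply: ereal_inf_lbound.
  by rewrite qz lee_fin leNgt tz.
have F_ge e : 0 < e -> exists2 t, t < z + e & u <= F t.
  move=> e0; have : (quantile p u < (z + e)%:E)%E by rewrite qz lte_fin ltrDl.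
  case/ereal_inf_lt => -[t| |] /= ut tz; first by exists t; rewrite -?lte_fin.
    by rewrite ltNge leey in tz.
  have : (quantile p u <= -oo)%E by exact: ereal_inf_lbound.
  by rewrite qz.
have Me e : 0 < e -> M * (e / M) = e by move=> e0; field; rewrite gt_eqF.
apply/eqP; rewrite eq_le; apply/andP; split; apply/ler_addgt0Pr => e e0.
- have eM : 0 < e / M by rewrite divr_gt0.
  have Fzu : F (z - e / M) < u by apply: F_lt; lra.
  have Mz : M * (z - (z - e / M)) = e by field; rewrite gt_eqF.
  have zz : z - e / M <= z by lra.
  by have := distF_sub_le zz (fun x _ => pM x); rewrite Mz; lra.
- have [t tz ut] := F_ge (e / M) (divr_gt0 e0 M0).
  have [tz'|zt] := leP t z; first by have := distF_le tz'; lra.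
  have := distF_sub_le (ltW zt) (fun x _ => pM x).
  have : M * (t - z) <= e by rewrite -(Me e e0) ler_wpM2l ?(ltW M0) //; lra.
  lra.
Qed.

Lemma quantile_distF z : 0 < p z -> quantile p (F z) = z%:E.
Proof.
move=> pz; apply/le_anti/andP; split; first by apply: ereal_inf_lbound => /=.
apply: le_ereal_inf_tmp => -[t| |] /= Ft.
- rewrite lee_fin leNgt; apply/negP => tz.
  have := @distF_lt_of_density_gt0 z t z pz tz.
  by rewrite (ltW tz) lexx => /(_ isT); lra.
- exact: leey.
- by have := distF_gt0 pz; rewrite ltNge Ft.
Qed.

Lemma J0_cases u : J0 p u = 0 \/ exists2 z, F z = u & J0 p u = p z.
Proof.
rewrite /J0; case qu: (quantile p u) => [z| |] /=; [right|left|left] => //.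
by exists z; first exact: distF_quantile.
Qed.

Lemma J0_ge0 u : 0 <= J0 p u.
Proof. by case: (J0_cases u) => [->|[z _ ->]]. Qed.

Lemma J0_distF z : 0 < p z -> J0 p (F z) = p z.
Proof. by move=> pz; rewrite /J0 quantile_distF. Qed.

Lemma J0_ub : exists M, forall u, J0 p u <= M.
Proof.
have [M M0 pM] := density_bounded; exists M => u.
by case: (J0_cases u) => [->|[z _ ->]] //; exact: ltW.
Qed.

Lemma Jhat_concave : concave_on01 (Jhat p).
Proof. exact: concave_on01_lcm01 J0_ub. Qed.

Lemma psi_star_noninc x y : x <= y -> (psi_star p y <= psi_star p x)%E.
Proof.
move=> xy; apply: (rderiv01_noninc Jhat_concave); first exact: distF_ge0.
exact: distF_le.
Qed.

(* Holds although [x / 0 = 0]: [p x > 0] forces [0 < F x < 1]. *)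
Lemma hazard_mul_min x : p x = hazard p x * Num.min (F x) (1 - F x).
Proof.
have [px0|px] := eqVneq (p x) 0; first by rewrite /hazard px0 !mul0r.
have {}px : 0 < p x by rewrite lt_neqAle eq_sym px p_ge0.
by rewrite /hazard divfK // gt_eqF // lt_min distF_gt0 // subr_gt0 distF_lt1.
Qed.

Lemma density_le_of_hazard_le x C : 0 <= C -> hazard p x <= C ->
  p x <= C * F x /\ p x <= C * (1 - F x).
Proof.
move=> C0 hC; have m0 : 0 <= Num.min (F x) (1 - F x).
  by rewrite le_min distF_ge0 subr_ge0 distF_le1.
have pC : p x <= C * Num.min (F x) (1 - F x) by rewrite {1}hazard_mul_min ler_wpM2r.
by split; apply: le_trans pC _; rewrite ler_wpM2l // ge_min lexx ?orbT.
Qed.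

Lemma hazard_le x C : 0 <= C -> p x <= C * Num.min (F x) (1 - F x) -> hazard p x <= C.
Proof.
move=> C0 pC; rewrite /hazard.
have [->|m0] := eqVneq (Num.min (F x) (1 - F x)) 0; first by rewrite invr0 mulr0.
by rewrite ler_pdivrMr // lt_neqAle eq_sym m0 le_min distF_ge0 subr_ge0 distF_le1.
Qed.

Lemma distF_le_near_zmin c : 0 < c -> from_right (zmin p) [set x | F x <= c].
Proof.
move=> c0; case zr: (zmin p) => [r| |] /=.
- have [M M0 pM] := density_bounded; near=> y.
  have ry : r < y by near: y; exact: nbhs_right_gt.
  have yr : (y - r) * M <= c.
    rewrite -ler_pdivlMr // lerBlDl; apply/ltW.
    by near: y; apply: nbhs_right_lt; rewrite ltrDl divr_gt0.
  by have := distF_sub_le (ltW ry) (fun x _ => pM x); rewrite /= (distF_zmin zr); lra.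
- by move: zmin_neq_pinfty; rewrite zr.
- have [z Fz] := exists_distF_lt c0; exists z.
  split => [|y yz /=]; first exact: num_real.
  by have := distF_le (ltW yz); lra.
Unshelve. all: by end_near. Qed.

Lemma distF_ge_near_zmax c : 0 < c -> from_left (zmax p) [set x | 1 - c <= F x].
Proof.
move=> c0; case zr: (zmax p) => [r| |] /=.
- have [M M0 pM] := density_bounded; near=> y.
  have yr : y < r by near: y; exact: nbhs_left_lt.
  have ry : (r - y) * M <= c.
    rewrite -ler_pdivlMr // lerBlDr -lerBlDl; apply/ltW.
    by near: y; apply: nbhs_left_gt; rewrite ltrBlDr ltrDl divr_gt0.
  by have := distF_sub_le (ltW yr) (fun x _ => pM x); rewrite /= (distF_zmax zr); lra.
- have [z Fz] := exists_distF_gt c0; exists z.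
  split => [|y zy /=]; first exact: num_real.
  by have := distF_le (ltW zy); lra.
- by move: zmax_neq_ninfty; rewrite zr.
Unshelve. all: by end_near. Qed.

Lemma Jhat_ge_J0 u : 0 <= u <= 1 -> J0 p u <= Jhat p u.
Proof. exact: (lcm01_ge J0_ub). Qed.

Lemma Jhat_le_affine a b u : (forall v, 0 <= v <= 1 -> J0 p v <= a + b * v) ->
  0 <= u <= 1 -> Jhat p u <= a + b * u.
Proof. by move=> J0_le u01; apply: (lcm01_le J0_ub (concave_on01_affine a b)). Qed.

Lemma Jhat_le_linear_of_density_le z C : 0 <= C -> 0 < F z ->
  (forall y, y <= z -> p y <= C * F y) ->
  exists2 K, 0 <= K & forall u, 0 <= u <= 1 -> Jhat p u <= K * u.
Proof.
move=> C0 Fz0 pC; have [M M0 pM] := density_bounded.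
have MF0 : 0 <= M / F z by rewrite divr_ge0 // ltW.
exists (C + M / F z) => [|u u01]; first exact: addr_ge0.
rewrite -[X in _ <= X]add0r; apply: Jhat_le_affine u01 => v /andP[v0 v1]; rewrite add0r.
case: (J0_cases v) => [->|[y <- ->]]; first by rewrite mulr_ge0 ?addr_ge0.
have [yz|zy] := leP y z.
  by apply: le_trans (pC y yz) _; rewrite ler_wpM2r ?distF_ge0 // lerDl.
have Fzy : F z <= F y by apply: distF_le; exact: ltW.
apply: le_trans (pM y) _; apply: le_trans (_ : M / F z * F y <= _).
  by rewrite mulrAC ler_pdivlMr // ler_wpM2l // ltW.
by rewrite ler_wpM2r ?distF_ge0 // lerDr.
Qed.

Lemma Jhat_le_linear1_of_density_le z C : 0 <= C -> F z < 1 ->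
  (forall y, z <= y -> p y <= C * (1 - F y)) ->
  exists2 K, 0 <= K & forall u, 0 <= u <= 1 -> Jhat p u <= K * (1 - u).
Proof.
move=> C0 Fz1 pC; have [M M0 pM] := density_bounded.
have MF0 : 0 <= M / (1 - F z) by rewrite divr_ge0 ?(ltW M0) // subr_ge0 ltW.
have affineE (K u : R) : K + - K * u = K * (1 - u) by ring.
exists (C + M / (1 - F z)) => [|u u01]; first exact: addr_ge0.
rewrite -affineE; apply: Jhat_le_affine u01 => v /andP[v0 v1]; rewrite affineE.
case: (J0_cases v) => [->|[y <- ->]].
  by apply: mulr_ge0; [exact: addr_ge0 | rewrite subr_ge0].
have [zy|yz] := leP z y.
  by apply: le_trans (pC y zy) _; rewrite ler_wpM2r ?subr_ge0 ?distF_le1 // lerDl.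
have Fyz : 1 - F z <= 1 - F y by rewrite lerD2l lerN2; apply: distF_le; exact: ltW.
apply: le_trans (pM y) _; apply: le_trans (_ : M / (1 - F z) * (1 - F y) <= _).
  by rewrite mulrAC ler_pdivlMr ?subr_gt0 // ler_wpM2l // ltW.
by rewrite ler_wpM2r ?subr_ge0 ?distF_le1 // lerDr.
Qed.

Lemma Jhat_le_small_linear e : 0 < e ->
  exists2 K, 0 <= K & forall u, 0 <= u <= 1 -> Jhat p u <= e + K * u.
Proof.
move=> e0; have [M M0 pM] := density_bounded.
have [d d0 [pe _]] := density_small_at_tails e0.
have Md0 : 0 <= M / d by rewrite divr_ge0 // ltW.
exists (M / d) => // u; apply: Jhat_le_affine => v /andP[v0 v1].
case: (J0_cases v) => [->|[z <- ->]].
  by apply: addr_ge0; [exact: ltW | exact: mulr_ge0].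
have [Fzd|dFz] := ltP (F z) d.
  apply: le_trans (pe z Fzd) _; rewrite lerDl.
  by apply: mulr_ge0 => //; exact: distF_ge0.
apply: le_trans (pM z) _; apply: ler_wpDl; first exact: ltW.
by rewrite mulrAC ler_pdivlMr // ler_wpM2l // ltW.
Qed.

Lemma Jhat_le_small_linear1 e : 0 < e ->
  exists2 K, 0 <= K & forall u, 0 <= u <= 1 -> Jhat p u <= e + K * (1 - u).
Proof.
move=> e0; have [M M0 pM] := density_bounded.
have [d d0 [_ pe]] := density_small_at_tails e0.
have Md0 : 0 <= M / d by rewrite divr_ge0 // ltW.
have affineE (K u : R) : e + K + - K * u = e + K * (1 - u) by ring.
exists (M / d) => // u u01; rewrite -affineE; apply: Jhat_le_affine u01.
move=> v /andP[v0 v1]; rewrite affineE.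
case: (J0_cases v) => [->|[z <- ->]].
  by apply: addr_ge0; [exact: ltW | apply: mulr_ge0; rewrite ?subr_ge0].
have [dFz|Fzd] := ltP (1 - d) (F z).
  apply: le_trans (pe z dFz) _; rewrite lerDl.
  by apply: mulr_ge0 => //; rewrite subr_ge0 distF_le1.
apply: le_trans (pM z) _; apply: ler_wpDl; first exact: ltW.
by rewrite mulrAC ler_pdivlMr // ler_wpM2l ?(ltW M0) //; lra.
Qed.

Local Notation hazard_limsup_zmin :=
  (limf_esup (fun z => (hazard p z)%:E) (from_right (zmin p))).
Local Notation hazard_limsup_zmax :=
  (limf_esup (fun z => (hazard p z)%:E) (from_left (zmax p))).

Lemma zmin_eq_ninfty : (hazard_limsup_zmin < +oo)%E -> zmin p = -oo%E.
Proof.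
case/limf_esup_EFin_lty => V + [C C0 hC].
case zr: (zmin p) => [r| |] //=; last by move: zmin_neq_pinfty; rewrite zr.
case/at_right_itv => e e0 eV; exfalso.
pose d := Num.min e (1 / (C + 1)).
have d0 : 0 < d by rewrite lt_min e0 divr_gt0 //; lra.
have Cd : (C + 1) * d <= 1.
  by rewrite mulrC -ler_pdivlMr; [rewrite ge_min lexx orbT | lra].
have F0 z : r < z < r + d -> F z = 0.
  move=> /andP[rz zrd].
  have pC x : r < x <= z -> p x <= C * F z.
    move=> /andP[rx xz]; have de : d <= e by rewrite ge_min lexx.
    have Vx : V x by apply: eV; rewrite rx /=; lra.
    have [pxF _] := density_le_of_hazard_le C0 (hC x Vx).
    by apply: le_trans pxF _; rewrite ler_wpM2l // distF_le.
  have := distF_sub_le (ltW rz) pC; rewrite (distF_zmin zr) subr0 => Fz.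
  have Crz : C * (z - r) < 1.
    by apply: le_lt_trans (_ : C * d < 1); [rewrite ler_wpM2l //; lra | lra].
  have : F z * (1 - C * (z - r)) <= 0 by lra.
  rewrite pmulr_lle0 ?subr_gt0 // => Fz0.
  by apply/eqP; rewrite eq_le Fz0 distF_ge0.
have [x px xr] : exists2 x, 0 < p x & x < r + d / 2.
  by apply: zmin_lt; rewrite zr lte_fin; lra.
have rx : r <= x by rewrite -lee_fin -zr zmin_le.
have xd : x < x + d / 4 by lra.
have := @distF_lt_of_density_gt0 x x (x + d / 4) px xd.
rewrite lexx (ltW xd) (F0 (x + d / 4)).
  by have := distF_ge0 x; lra.
by apply/andP; split; lra.
Qed.

Lemma zmax_eq_pinfty : (hazard_limsup_zmax < +oo)%E -> zmax p = +oo%E.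
Proof.
case/limf_esup_EFin_lty => V + [C C0 hC].
case zr: (zmax p) => [r| |] //=; last by move: zmax_neq_ninfty; rewrite zr.
case/at_left_itv => e e0 eV; exfalso.
pose d := Num.min e (1 / (C + 1)).
have d0 : 0 < d by rewrite lt_min e0 divr_gt0 //; lra.
have Cd : (C + 1) * d <= 1.
  by rewrite mulrC -ler_pdivlMr; [rewrite ge_min lexx orbT | lra].
have F1 z : r - d < z < r -> F z = 1.
  move=> /andP[rdz rz].
  have pC x : z < x <= r -> p x <= C * (1 - F z).
    have Fz1 : 0 <= 1 - F z by rewrite subr_ge0 distF_le1.
    move=> /andP[zx]; rewrite le_eqVlt => /predU1P[->|xr].
      exact: le_trans (density_zmax_le0 zr) (mulr_ge0 C0 Fz1).
    have de : d <= e by rewrite ge_min lexx.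
    have Vx : V x by apply: eV; rewrite xr andbT; lra.
    have [_ pxF] := density_le_of_hazard_le C0 (hC x Vx).
    apply: le_trans pxF _; rewrite ler_wpM2l // lerD2l lerN2 distF_le //; exact: ltW.
  have := distF_sub_le (ltW rz) pC; rewrite (distF_zmax zr) => Fz.
  have Crz : C * (r - z) < 1.
    by apply: le_lt_trans (_ : C * d < 1); [rewrite ler_wpM2l //; lra | lra].
  have : (1 - F z) * (1 - C * (r - z)) <= 0 by lra.
  rewrite pmulr_lle0 ?subr_gt0 // subr_le0 => Fz1.
  by apply/eqP; rewrite eq_le Fz1 distF_le1.
have [x px xr] : exists2 x, 0 < p x & r - d / 2 < x.
  by apply: zmax_gt; rewrite zr lte_fin; lra.
have rx : x <= r by rewrite -lee_fin -zr zmax_ge.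
have xd : x - d / 4 < x by lra.
have := @distF_lt_of_density_gt0 x (x - d / 4) x px xd.
rewrite lexx (ltW xd) (F1 (x - d / 4)).
  by have := distF_le1 x; lra.
by apply/andP; split; lra.
Qed.

Lemma psi_starE z : F z < 1 -> psi_star p z = rderiv (Jhat p) (F z).
Proof. by move=> Fz1; rewrite /psi_star /rderiv01 Fz1. Qed.

Lemma hazard_le_of_Jhat_le C : 0 <= C -> (forall u, 0 < u <= 1 -> Jhat p u <= C * u) ->
  forall x, F x <= 1 / 2 -> hazard p x <= C.
Proof.
move=> C0 JC x Fx; apply: hazard_le => //; rewrite min_l; last lra.
have [px0|px] := eqVneq (p x) 0; first by rewrite px0 mulr_ge0 ?distF_ge0.
have {}px : 0 < p x by rewrite lt_neqAle eq_sym px p_ge0.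
have Fx01 : 0 < F x <= 1 by rewrite distF_gt0 ?distF_le1.
rewrite -{1}(J0_distF px); apply: le_trans (Jhat_ge_J0 _) (JC _ Fx01).
by rewrite ltW ?distF_le1 ?distF_gt0.
Qed.

Lemma hazard_le_of_Jhat_le1 C : 0 <= C ->
  (forall u, 0 <= u < 1 -> Jhat p u <= C * (1 - u)) ->
  forall x, 1 / 2 <= F x -> hazard p x <= C.
Proof.
move=> C0 JC x Fx; apply: hazard_le => //; rewrite min_r; last lra.
have [px0|px] := eqVneq (p x) 0.
  by rewrite px0 mulr_ge0 // subr_ge0 distF_le1.
have {}px : 0 < p x by rewrite lt_neqAle eq_sym px p_ge0.
have Fx01 : 0 <= F x < 1 by rewrite distF_ge0 distF_lt1.
rewrite -{1}(J0_distF px); apply: le_trans (Jhat_ge_J0 _) (JC _ Fx01).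
by rewrite distF_ge0 distF_le1.
Qed.

Lemma Jhat_ge0 u : 0 <= u <= 1 -> 0 <= Jhat p u.
Proof. by move=> u01; apply: le_trans (J0_ge0 u) (Jhat_ge_J0 u01). Qed.

Lemma psi_star_limNy_lty :
  (hazard_limsup_zmin < +oo)%E -> (lim (psi_star p z @[z --> -oo%R]) < +oo)%E.
Proof.
move=> hazard_fin; have zmin_Ny := zmin_eq_ninfty hazard_fin.
case/limf_esup_EFin_lty: hazard_fin => V + [C C0 hC]; rewrite zmin_Ny => -[z0 [_ z0V]].
have [x px xz0] : exists2 x, 0 < p x & x < z0 by apply: zmin_lt; rewrite zmin_Ny ltNyr.
have [K K0 JK] : exists2 K, 0 <= K & forall u, 0 <= u <= 1 -> Jhat p u <= K * u.
  apply: (@Jhat_le_linear_of_density_le x C C0 (distF_gt0 px)) => y yx.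
  by have [] := density_le_of_hazard_le C0 (hC y (z0V y (le_lt_trans yx xz0))).
have J00 : 0 <= Jhat p 0 by apply: Jhat_ge0; rewrite lexx ler01.
have DK := rderiv_le_of_le_linear Jhat_concave J00 JK.
apply: (@le_lt_trans _ _ K%:E); last exact: ltry.
apply: lime_le; first exact: nonincreasing_cvgNy psi_star_noninc.
near=> z; have zx : z <= x.
  by apply/ltW; near: z; apply: nbhs_ninfty_lt; exact: num_real.
have Fz1 : F z < 1 by apply: le_lt_trans (distF_le zx) (distF_lt1 px).
by rewrite psi_starE // DK // distF_ge0.
Unshelve. all: by end_near. Qed.

Lemma hazard_limsup_zmin_lty :
  (lim (psi_star p z @[z --> -oo%R]) < +oo)%E -> (hazard_limsup_zmin < +oo)%E.
Proof.
case/lty_le_EFin => C C0 limC.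
have psiC z : (psi_star p z <= C%:E)%E.
  exact: le_trans (nonincreasing_le_limNy psi_star_noninc z) limC.
have DC w : 0 < w < 1 -> (rderiv (Jhat p) w <= C%:E)%E.
  move=> /andP[w0 w1]; have [z Fzw] := exists_distF_lt w0.
  have := rderiv01_noninc Jhat_concave (distF_ge0 z) (ltW Fzw).
  by rewrite {1}/rderiv01 w1 => /le_trans; apply; exact: psiC.
have JC := le_linear_of_rderiv_le Jhat_concave C0 Jhat_le_small_linear DC.
apply/limf_esup_EFin_lty; exists [set x | F x <= 1 / 2].
  by apply: distF_le_near_zmin; lra.
by exists C => // x; apply: hazard_le_of_Jhat_le.
Qed.

Lemma psi_star_limy_gtNy :
  (hazard_limsup_zmax < +oo)%E -> (-oo < lim (psi_star p z @[z --> +oo%R]))%E.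
Proof.
move=> hazard_fin; have zmax_y := zmax_eq_pinfty hazard_fin.
case/limf_esup_EFin_lty: hazard_fin => V + [C C0 hC]; rewrite zmax_y => -[z0 [_ z0V]].
have [x px z0x] : exists2 x, 0 < p x & z0 < x by apply: zmax_gt; rewrite zmax_y ltry.
have [K K0 JK] : exists2 K, 0 <= K & forall u, 0 <= u <= 1 -> Jhat p u <= K * (1 - u).
  apply: (@Jhat_le_linear1_of_density_le x C C0 (distF_lt1 px)) => y xy.
  by have [] := density_le_of_hazard_le C0 (hC y (z0V y (lt_le_trans z0x xy))).
have J10 : 0 <= Jhat p 1 by apply: Jhat_ge0; rewrite lexx ler01.
have DK := rderiv_ge_of_le_linear1 Jhat_concave J10 JK.
have Fz1 z : F z < 1.
  have [y py zy] : exists2 y, 0 < p y & z < y by apply: zmax_gt; rewrite zmax_y ltry.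
  exact: le_lt_trans (distF_le (ltW zy)) (distF_lt1 py).
apply: (@lt_le_trans _ _ (- K)%:E); first exact: ltNyr.
apply: lime_ge; first exact: nonincreasing_cvgy psi_star_noninc.
near=> z; rewrite psi_starE //; apply: DK.
by rewrite distF_ge0 Fz1.
Unshelve. all: by end_near. Qed.

Lemma hazard_limsup_zmax_lty :
  (-oo < lim (psi_star p z @[z --> +oo%R]))%E -> (hazard_limsup_zmax < +oo)%E.
Proof.
case/gtNy_ge_EFin => C C0 limC.
have psiC z : ((- C)%:E <= psi_star p z)%E.
  exact: le_trans limC (nonincreasing_limy_le psi_star_noninc z).
have DC w : 0 < w < 1 -> ((- C)%:E <= rderiv (Jhat p) w)%E.
  move=> /andP[w0 w1]; have [z Fzw] : exists z, 1 - (1 - w) < F z.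
    by apply: exists_distF_gt; rewrite subr_gt0.
  have wFz : w <= F z by lra.
  have := rderiv01_noninc Jhat_concave (ltW w0) wFz.
  by rewrite {2}/rderiv01 w1; apply: le_trans; exact: psiC.
have JC := le_linear1_of_rderiv_ge Jhat_concave C0 Jhat_le_small_linear1 DC.
apply/limf_esup_EFin_lty; exists [set x | 1 - 1 / 2 <= F x].
  by apply: distF_ge_near_zmax; lra.
by exists C => // x /= Fx; apply: hazard_le_of_Jhat_le1 => //; lra.
Qed.

End density.

Unset Implicit Arguments.

Theorem lemma2p5 (R : realType) (p0 : R -> R) :
  is_density p0 -> unif_cont p0 ->
  (((lim (psi_star p0 z @[z --> -oo%R]) < +oo)%E <->
     (limf_esup (fun z => (hazard p0 z)%:E) (from_right (zmin p0)) < +oo)%E)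
   /\ ((lim (psi_star p0 z @[z --> -oo%R]) < +oo)%E -> zmin p0 = -oo%E))
  /\
  (((lim (psi_star p0 z @[z --> +oo%R]) > -oo)%E <->
     (limf_esup (fun z => (hazard p0 z)%:E) (from_left (zmax p0)) < +oo)%E)
   /\ ((lim (psi_star p0 z @[z --> +oo%R]) > -oo)%E -> zmax p0 = +oo%E)).
Proof.
case=> p0_ge0 [p0_meas p0_int1] p0_uc.
have psi_hazard_zmin := hazard_limsup_zmin_lty p0_ge0 p0_meas p0_int1 p0_uc.
have hazard_psi_Ny := psi_star_limNy_lty p0_ge0 p0_meas p0_int1 p0_uc.
have hazard_zmin := zmin_eq_ninfty p0_ge0 p0_meas p0_int1 p0_uc.
have psi_hazard_zmax := hazard_limsup_zmax_lty p0_ge0 p0_meas p0_int1 p0_uc.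
have hazard_psi_y := psi_star_limy_gtNy p0_ge0 p0_meas p0_int1 p0_uc.
have hazard_zmax := zmax_eq_pinfty p0_ge0 p0_meas p0_int1 p0_uc.
split; split.
- by split.
- by move/psi_hazard_zmin/hazard_zmin.
- by split.
- by move/psi_hazard_zmax/hazard_zmax.
Qed.
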